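(* Let $n\ge d+1\ge 3$ be integers and let $\mathcal{F}\subseteq\binom{[n]}{d+1}$. Suppose that for every $F\in\mathcal{F}$ there exists a subset $B_F\subseteq F$ with $|B_F|=d$ such that $F'\cap F\neq B_F$ for every $F'\in\mathcal{F}$. Then $|\mathcal{F}|\le\binom{n-1}{d}$. Moreover, equality holds if and only if $\mathcal{F}$ is a star of size $\binom{n-1}{d}$, i.e. $\mathcal{F}=\{F\in\binom{[n]}{d+1}: a\in F\}$ for some $a\in[n]$.
   Context: $\binom{[n]}{k}$ denotes the family of all $k$-element subsets of $[n]=\{1,\dots,n\}$. A star is a family all of whose members contain a common element. *)

From mathcomp Require Import all_boot.
Unset Printing Implicit Defensive.

(* The ground set [n] = {1..n} is modelled by 'I_n = {0..n-1}. *)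

Definition binom_fam (n k : nat) : {set {set 'I_n}} := [set A : {set 'I_n} | #|A| == k].

Definition full_star (n k : nat) (a : 'I_n) : {set {set 'I_n}} :=
  [set A : {set 'I_n} | (#|A| == k) && (a \in A)].

From mathcomp Require Import all_boot zify.
Set Implicit Arguments.
Unset Strict Implicit.

(* For each member F fix its base B_F; as two (d+1)-sets containing the d-set
   B_F either coincide or meet exactly in B_F, F is the only member containing
   B_F, so F |-> B_F is injective.  Double count the pairs (B, x) with
   |B| = d and x |: B a member: the family accounts for (d+1)|Fam| of them,
   each base for at most one, and each of the 'C(n,d) - |Fam| other d-sets for
   at most n - d.  As n 'C(n-1,d) = (n-d) 'C(n,d), this gives
   |Fam| <= 'C(n-1,d), and in case of equality every non-base d-set has all
   its extensions in the family.  Writing some member as a |: B_F, the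
   property "a |: B is a member with base B" then survives every exchange
   B ~> u |: (B :\ e) with u != a, hence holds for all d-sets avoiding a, and
   the family is the star at a. *)

Lemma eq_or_setI_eq (T : finType) (B F1 F2 : {set T}) (d : nat) :
  B \subset F1 -> B \subset F2 -> #|B| = d -> #|F1| = d.+1 -> #|F2| = d.+1 ->
  F1 = F2 \/ F1 :&: F2 = B.
Proof.
move=> sBF1 sBF2 cB cF1 cF2.
have sB : B \subset F1 :&: F2 by rewrite subsetI sBF1 sBF2.
have le_d1 : #|F1 :&: F2| <= d.+1 by rewrite -cF1 subset_leq_card ?subsetIl.
have ge_d : d <= #|F1 :&: F2| by rewrite -cB subset_leq_card.
have [cI|cI] : #|F1 :&: F2| = d \/ #|F1 :&: F2| = d.+1 by lia.
  by right; apply/esym/eqP; rewrite eqEcard sB cI cB /=.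
have <- : F1 :&: F2 = F1 by apply/eqP; rewrite eqEcard subsetIl cI cF1 /=.
have -> : F1 :&: F2 = F2 by apply/eqP; rewrite eqEcard subsetIr cI cF2 /=.
by left.
Qed.

Lemma sum_card_exchange (U T : finType) (A : {set U}) (f : U -> {set T}) :
  \sum_(u in A) #|f u| = \sum_x #|[set u in A | x \in f u]|.
Proof.
transitivity (\sum_(u in A) \sum_x (x \in f u : nat)).
  by apply: eq_bigr => u _; rewrite -sum1_card big_mkcond.
rewrite exchange_big; apply: eq_bigr => x _.
rewrite -sum1_card big_mkcond [RHS]big_mkcond /=.
by apply: eq_bigr => u _; rewrite inE; case: (u \in A); case: (x \in f u).
Qed.

Lemma card_star (T : finType) (a : T) (k : nat) :
  #|[set A : {set T} | (#|A| == k.+1) && (a \in A)]| = 'C(#|T|.-1, k).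
Proof.
have notin_sub (B : {set T}) : B \subset [set~ a] -> a \notin B.
  by move=> sBa; apply/negP => /(subsetP sBa); rewrite !inE eqxx.
have -> : [set A : {set T} | (#|A| == k.+1) && (a \in A)] =
    (fun B => a |: B) @: [set B : {set T} | B \subset [set~ a] & #|B| == k].
  apply/setP => A; rewrite inE; apply/andP/imsetP => [[/eqP cA aA] | [B]].
    exists (A :\ a); last by rewrite setD1K.
    rewrite inE; apply/andP; split.
      by apply/subsetP => x; rewrite !inE => /andP [].
    by move: cA; rewrite (cardsD1 a) aA add1n => -[->].
  rewrite inE => /andP [sBa /eqP cB] ->.
  by rewrite cardsU1 notin_sub // cB setU11.
rewrite card_in_imset ?cards_draws ?cardsC1 // => B1 B2.
rewrite !inE => /andP [/notin_sub aB1 _] /andP [/notin_sub aB2 _] eqB.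
by rewrite -(setU1K aB1) eqB setU1K.
Qed.

(* Connectivity of the Johnson graph on the #|B0|-subsets of U. *)
Lemma exchange_connected (T : finType) (U B0 : {set T}) (Q : pred {set T}) :
  B0 \subset U -> Q B0 ->
  (forall (B : {set T}) (e u : T), Q B -> B \subset U -> e \in B -> u \in U :\: B ->
     Q (u |: (B :\ e))) ->
  forall B : {set T}, B \subset U -> #|B| = #|B0| -> Q B.
Proof.
move=> sB0U QB0 Qexchange B; move cBB0: #|B :\: B0| => k.
elim: k B cBB0 => [|k IHk] B cBB0 sBU cB.
  have sBB0 : B \subset B0 by rewrite -setD_eq0 -cards_eq0 cBB0.
  by have /eqP -> : B == B0 by rewrite eqEcard sBB0 cB /=.
have cB0B : #|B0 :\: B| = k.+1 by rewrite cardsD setIC -cB -cardsD.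
have [u /setDP [uB uB0]] : exists u, u \in B :\: B0.
  by apply/set0Pn; rewrite -card_gt0 cBB0.
have [e /setDP [eB0 eB]] : exists e, e \in B0 :\: B.
  by apply/set0Pn; rewrite -card_gt0 cB0B.
have eBu : e \notin B :\ u by rewrite !inE (negbTE eB) andbF.
have ue : u != e by apply: contraNneq eB => <-.
have QB' : Q (e |: (B :\ u)).
  apply: IHk.
  - have -> : (e |: (B :\ u)) :\: B0 = (B :\: B0) :\ u.
      apply/setP => x; rewrite !inE; case: (eqVneq x e) => [->|_] /=.
        by rewrite eB0 andbF.
      by rewrite andbCA.
    by move: cBB0; rewrite (cardsD1 u) !inE uB uB0 => -[].
  - by rewrite subUset sub1set (subsetP sB0U) // (subset_trans _ sBU) ?subD1set.
  - by rewrite cardsU1 eBu -cB (cardsD1 u B) uB.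
have := Qexchange _ e u QB'; rewrite setU1K // setD1K //; apply.
- by rewrite subUset sub1set (subsetP sB0U) // (subset_trans _ sBU) ?subD1set.
- exact: setU11.
- by rewrite !inE (subsetP sBU) // negb_or ue eqxx andbT.
Qed.

(* Here c = 'C(n, d), C1 = 'C(n.-1, d), and s1, s2 count the extensions of
   the bases and of the other d-sets. *)
Lemma double_count_bound (n d N c C1 s1 s2 : nat) :
  0 < n -> n * C1 = (n - d) * c -> N <= c ->
  s1 <= N -> s2 <= (c - N) * (n - d) -> s1 + s2 = d.+1 * N ->
  N <= C1 /\ (N = C1 -> s2 = (c - N) * (n - d)).
Proof.
move=> n_gt0 nC1 Nc s1N s2le s12.
have [dn | nd] := leqP d n; last first.
  have -> : n - d = 0 by lia.
  by move: s2le nC1; rewrite !muln0; nia.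
have [m def_n] : exists m, n = d + m by exists (n - d); lia.
move: nC1 s2le; rewrite def_n addKn => nC1 s2le.
have NC1 : N <= C1.
  have : (d + m) * N <= (d + m) * C1 by nia.
  by rewrite leq_pmul2l -?def_n.
by split=> // eqN; nia.
Qed.

Section BasedFamily.

Variables (T : finType) (d : nat) (Fam : {set {set T}}).
Variable base : {set T} -> {set T}.
Hypothesis card_Fam : forall F, F \in Fam -> #|F| = d.+1.
Hypothesis base_sub : forall F, F \in Fam -> base F \subset F.
Hypothesis card_base : forall F, F \in Fam -> #|base F| = d.
Hypothesis base_avoided :
  forall F F', F \in Fam -> F' \in Fam -> F' :&: F != base F.

Lemma base_sub_eq F F' : F \in Fam -> F' \in Fam -> base F \subset F' -> F' = F.
Proof.
move=> FFam F'Fam sBF'.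
have [//|eqB] := eq_or_setI_eq sBF' (base_sub FFam) (card_base FFam)
  (card_Fam F'Fam) (card_Fam FFam).
by have := base_avoided FFam F'Fam; rewrite eqB eqxx.
Qed.

Lemma base_inj : {in Fam &, injective base}.
Proof.
by move=> F1 F2 F1Fam F2Fam eqB; apply: base_sub_eq; rewrite // -eqB base_sub.
Qed.

Lemma base_eq_of_sub B F :
  B \in base @: Fam -> F \in Fam -> B \subset F -> base F = B.
Proof. by case/imsetP=> F' F'Fam -> FFam /base_sub_eq ->. Qed.

Definition extensions (B : {set T}) := [set x | (x \notin B) && (x |: B \in Fam)].

Lemma extensions_subC B : extensions B \subset ~: B.
Proof. by apply/subsetP => x; rewrite !inE => /andP []. Qed.

Lemma card_setD_base F : F \in Fam -> #|F :\: base F| = 1.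
Proof.
by move=> FFam; rewrite cardsD (setIidPr (base_sub FFam)) card_Fam ?card_base ?subSnn.
Qed.

Lemma card_extensions_base F : F \in Fam -> #|extensions (base F)| <= 1.
Proof.
move=> FFam; rewrite -(card_setD_base FFam).
apply/subset_leq_card/subsetP => x; rewrite !inE => /andP [xB xBFam].
rewrite xB -(base_sub_eq FFam xBFam) ?setU11 //; exact: subsetUr.
Qed.

Lemma sum_card_extensions :
  \sum_(B in [set B : {set T} | #|B| == d]) #|extensions B| = d.+1 * #|Fam|.
Proof.
transitivity (\sum_(F in Fam) #|F|); last first.
  by rewrite mulnC -sum_nat_const; apply: eq_bigr => F /card_Fam.
rewrite !sum_card_exchange; apply: eq_bigr => x _.
have -> : [set B in [set B : {set T} | #|B| == d] | x \in extensions B] =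
    (fun F => F :\ x) @: [set F in Fam | x \in F].
  apply/setP => B; apply/idP/imsetP => [|[F /setIdP [FFam xF] ->]].
    rewrite !inE => /and3P [_ xB xBFam].
    by exists (x |: B); rewrite ?setU1K // inE xBFam setU11.
  rewrite !inE eqxx setD1K // FFam /= andbT.
  by move: (card_Fam FFam); rewrite (cardsD1 x) xF add1n => -[->].
rewrite card_in_imset // => F1 F2; rewrite !inE => /andP [_ xF1] /andP [_ xF2] eqF.
by rewrite -(setD1K xF1) eqF setD1K.
Qed.

Lemma card_based_family : 0 < #|T| ->
  #|Fam| <= 'C(#|T|.-1, d) /\
  (#|Fam| = 'C(#|T|.-1, d) -> forall (B : {set T}) (x : T),
     #|B| = d -> B \notin base @: Fam -> x \notin B -> x |: B \in Fam).
Proof.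
move=> T_gt0; set D := [set B : {set T} | #|B| == d]; set S := base @: Fam.
have sSD : S \subset D.
  by apply/subsetP => _ /imsetP [F FFam ->]; rewrite inE card_base.
have cS : #|S| = #|Fam| by rewrite card_in_imset //; exact: base_inj.
have cDS : #|D :\: S| = 'C(#|T|, d) - #|Fam|.
  by rewrite cardsD (setIidPr sSD) card_draws cS.
have sum_split := sum_card_extensions.
rewrite (big_setID S) (setIidPr sSD) /= -/D -/S in sum_split.
have sumS : \sum_(B in S) #|extensions B| <= #|Fam|.
  rewrite -cS -sum1_card; apply: leq_sum => _ /imsetP [F FFam ->].
  exact: card_extensions_base.
have sumDS := leqif_sum (fun B (_ : B \in D :\: S) =>
  subset_leqif_cards (extensions_subC B)).
have sumC : \sum_(B in D :\: S) #|~: B| = ('C(#|T|, d) - #|Fam|) * (#|T| - d).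
  rewrite -cDS -sum_nat_const; apply: eq_bigr => B.
  by rewrite !inE => /andP [_ /eqP cB]; rewrite cardsCs setCK cB.
rewrite sumC in sumDS.
have NC : #|Fam| <= 'C(#|T|, d) by rewrite -card_draws -cS subset_leq_card.
have [le_N eq_N] :=
  double_count_bound T_gt0 (mul_bin_down #|T| d) NC sumS sumDS sum_split.
split=> // /eq_N /eqP; rewrite sumDS => /forall_inP eqC B x cB BS xB.
have : x \in extensions B by rewrite (eqP (eqC B _)) ?inE ?BS ?cB /=.
by rewrite inE => /andP [].
Qed.

Section Extremal.

Hypothesis nonbase_full : forall (B : {set T}) (x : T),
  #|B| = d -> B \notin base @: Fam -> x \notin B -> x |: B \in Fam.

Definition apex_base (a : T) (B : {set T}) :=
  (a |: B \in Fam) && (base (a |: B) == B).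

Lemma apex_base_card a B : apex_base a B -> #|B| = d /\ a \notin B.
Proof.
case/andP=> aBFam /eqP baseaB; have cB : #|B| = d by rewrite -baseaB card_base.
split=> //; move: (card_Fam aBFam); rewrite cardsU1 cB.
by case: (a \notin B) => //=; lia.
Qed.

Lemma apex_base_exchange a B e u : apex_base a B ->
  e \in B -> u \notin B -> u != a -> apex_base a (u |: (B :\ e)).
Proof.
move=> QB eB uB ua; have [cB aB] := apex_base_card QB.
case/andP: QB => aBFam /eqP baseaB.
have cBe : #|B :\ e| = d.-1 by rewrite -cB (cardsD1 e B) eB.
have d_gt0 : 0 < d by rewrite -cB card_gt0; apply/set0Pn; exists e.
have aBe : a \notin B :\ e by rewrite inE (negbTE aB) andbF.
have uBe : u \notin B :\ e by rewrite inE (negbTE uB) andbF.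
have cA : #|a |: (B :\ e)| = d by rewrite cardsU1 aBe cBe add1n prednK.
have cC : #|u |: (B :\ e)| = d by rewrite cardsU1 uBe cBe add1n prednK.
have A_nonbase : a |: (B :\ e) \notin base @: Fam.
  apply: contra aB => /base_eq_of_sub /(_ aBFam (setUS _ (subD1set B e))).
  by rewrite baseaB => ->; exact: setU11.
have C_base : u |: (B :\ e) \in base @: Fam.
  apply: contraT => C_nonbase.
  have : e |: (u |: (B :\ e)) \in Fam.
    by apply: nonbase_full; rewrite // !inE eqxx /= orbF; apply: contraNneq uB => <-.
  rewrite setUCA setD1K // => uBFam.
  have := base_sub_eq aBFam uBFam; rewrite baseaB => /(_ (subsetUr _ _)) eq_ua.
  by move: (setU11 u B); rewrite eq_ua in_setU1 (negbTE ua) (negbTE uB).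
have aCFam : a |: (u |: (B :\ e)) \in Fam.
  by rewrite setUCA; apply: nonbase_full; rewrite // in_setU1 negb_or ua.
by rewrite /apex_base aCFam; apply/eqP/base_eq_of_sub; rewrite ?subsetUr.
Qed.

Lemma apex_base_all a B0 : apex_base a B0 ->
  forall B : {set T}, #|B| = d -> a \notin B -> apex_base a B.
Proof.
have sub_setC1 (B : {set T}) : a \notin B -> B \subset [set~ a].
  by move=> aB; apply/subsetP => x xB; rewrite !inE; apply: contraNneq aB => <-.
move=> QB0 B cB aB; have [cB0 aB0] := apex_base_card QB0.
apply: (exchange_connected (sub_setC1 _ aB0) QB0); rewrite ?sub_setC1 ?cB ?cB0 //.
by move=> B' e u QB' _ eB'; rewrite !inE => /andP [uB' ua]; apply: apex_base_exchange.
Qed.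

Lemma based_family_star :
  Fam != set0 -> exists a, Fam = [set F : {set T} | (#|F| == d.+1) && (a \in F)].
Proof.
case/set0Pn=> F0 F0Fam.
have [a eq_a] : exists a, F0 :\: base F0 = [set a].
  by apply/cards1P; rewrite card_setD_base.
have /setDP [aF0 aB0] : a \in F0 :\: base F0 by rewrite eq_a set11.
have F0E : a |: base F0 = F0.
  apply/eqP; rewrite eqEcard subUset sub1set aF0 base_sub //=.
  by rewrite cardsU1 aB0 card_base ?card_Fam.
have QB0 : apex_base a (base F0) by rewrite /apex_base F0E F0Fam eqxx.
exists a; apply/setP => F; rewrite inE; apply/idP/andP => [FFam | [/eqP cF aF]].
  split; first by rewrite card_Fam.
  have [x xF] : exists x, x \in F by apply/set0Pn; rewrite -card_gt0 card_Fam.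
  apply: contraT => aF; have aFx : a \notin F :\ x by rewrite inE (negbTE aF) andbF.
  have cFx : #|F :\ x| = d by move: (card_Fam FFam); rewrite (cardsD1 x) xF => -[].
  case/andP: (apex_base_all QB0 cFx aFx) => aFxFam /eqP base_aFx.
  have eqF : F = a |: (F :\ x) by apply: base_sub_eq; rewrite ?base_aFx ?subD1set.
  by move: aF; rewrite eqF setU11.
have cFa : #|F :\ a| = d by move: cF; rewrite (cardsD1 a) aF => -[].
have aFa : a \notin F :\ a by rewrite !inE eqxx.
by case/andP: (apex_base_all QB0 cFa aFa); rewrite setD1K.
Qed.

End Extremal.

End BasedFamily.

Theorem theorem5p1 (n d : nat) (Fam : {set {set 'I_n}}) :
  2 <= d -> d + 1 <= n ->
  Fam \subset binom_fam n d.+1 ->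
  (forall F, F \in Fam ->
     exists B : {set 'I_n}, [/\ B \subset F, #|B| = d &
       forall F', F' \in Fam -> F' :&: F != B]) ->
  #|Fam| <= 'C(n.-1, d) /\
  (#|Fam| = 'C(n.-1, d) <-> exists a : 'I_n, Fam = full_star n d.+1 a).
Proof.
(* The argument needs no lower bound on d. *)
move=> _ dn sub_binom has_base.
have card_Fam F : F \in Fam -> #|F| = d.+1.
  by move=> /(subsetP sub_binom); rewrite inE => /eqP.
have /fin_all_exists [base baseP] : forall F : {set 'I_n}, exists B : {set 'I_n},
    F \in Fam -> [/\ B \subset F, #|B| = d & forall F', F' \in Fam -> F' :&: F != B].
  move=> F; case: (boolP (F \in Fam)) => [/has_base [B PB] | _]; last by exists set0.
  by exists B.
have base_sub F : F \in Fam -> base F \subset F by case/baseP.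
have card_base F : F \in Fam -> #|base F| = d by case/baseP.
have base_avoided F F' : F \in Fam -> F' \in Fam -> F' :&: F != base F.
  by case/baseP=> _ _; apply.
have n_gt0 : 0 < #|'I_n| by rewrite card_ord (leq_trans _ dn) ?addn1.
have [le_Fam eq_Fam] :=
  card_based_family card_Fam base_sub card_base base_avoided n_gt0.
rewrite card_ord in le_Fam eq_Fam.
split=> //; split=> [/[dup] eqC /eq_Fam full | [a ->]].
  apply: (based_family_star card_Fam base_sub card_base base_avoided full).
  by rewrite -card_gt0 eqC bin_gt0; lia.
by rewrite /full_star card_star card_ord.
Qed.
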